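(* Let $T,S\in\mathcal{B}_A(\mathcal{H})$. Then $$\omega_A(TS)\le \|T\|_A\,\omega_A(S)+\tfrac12\,\omega_A\big(TS+ST^{\sharp_A}\big)\quad\text{and}\quad \omega_A(TS)\le \|T\|_A\,\omega_A(S)+\tfrac12\,\omega_A\big(TS-ST^{\sharp_A}\big).$$
   Context: $\mathcal{H}$ is a complex Hilbert space with inner product $\langle\cdot,\cdot\rangle$, and $A$ is a fixed nonzero positive bounded operator on $\mathcal{H}$. Set $\langle x,y\rangle_A=\langle Ax,y\rangle$ and $\|x\|_A=\|A^{1/2}x\|$. $\mathcal{B}_A(\mathcal{H})$ is the set of bounded operators $T$ for which there exists a bounded $S$ with $\langle Tx,y\rangle_A=\langle x,Sy\rangle_A$ for all $x,y$ (equivalently $\mathcal{R}(T^*A)\subseteq\mathcal{R}(A)$). For $T\in\mathcal{B}_A(\mathcal{H})$, $T^{\sharp_A}$ denotes the reduced solution of $AX=T^*A$, i.e. $T^{\sharp_A}=A^\dagger T^*A$ ($A^\dagger$ the Moore–Penrose inverse). For an operator $T$ with $\|Tx\|_A\le\lambda\|x\|_A$ for some $\lambda>0$ and all $x$, $\|T\|_A=\sup\{\|Tx\|_A: \|x\|_A=1\}$, and $\omega_A(T)=\sup\{|\langle Tx,x\rangle_A|:\|x\|_A=1\}$ is the $A$-numerical radius. *)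

From mathcomp Require Import all_boot all_order all_algebra.
From mathcomp Require Import complex.
From mathcomp Require Import classical_sets reals.
Import GRing.Theory Num.Theory.

Set Implicit Arguments.
Unset Strict Implicit.
Unset Printing Implicit Defensive.

Local Open Scope ring_scope.
Local Open Scope complex_scope.

Section Hilbert.
Variable R : realType.
Variable V : lmodType R[i].
Variable ip : V -> V -> R[i].

Definition hnorm (x : V) : R := Num.sqrt (complex.Re (ip x x)).

Definition is_inner_product : Prop :=
  [/\ (forall x y z, ip (x + y) z = ip x z + ip y z),
      (forall (a : R[i]) x y, ip (a *: x) y = a * ip x y),
      (forall x y, ip y x = (ip x y)^*),
      (forall x, 0 <= ip x x) &
      (forall x, ip x x = 0 -> x = 0)].

Definition is_complete : Prop :=
  forall u : nat -> V,
    (forall e : R, 0 < e -> exists N, forall m n, (N <= m)%N -> (N <= n)%N ->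
        hnorm (u m - u n) < e) ->
    exists l : V, forall e : R, 0 < e -> exists N, forall n, (N <= n)%N ->
        hnorm (u n - l) < e.

Definition is_hilbert : Prop := is_inner_product /\ is_complete.

Definition is_bounded_op (T : V -> V) : Prop :=
  (forall (a : R[i]) x y, T (a *: x + y) = a *: T x + T y) /\
  exists c : R, forall x, hnorm (T x) <= c * hnorm x.

Definition is_positive_op (A : V -> V) : Prop :=
  is_bounded_op A /\ forall x, 0 <= ip (A x) x.

Definition ipA (A : V -> V) (x y : V) : R[i] := ip (A x) y.

Definition Anorm (A : V -> V) (x : V) : R := Num.sqrt (complex.Re (ip (A x) x)).

Definition in_BA (A T : V -> V) : Prop :=
  is_bounded_op T /\
  exists S : V -> V, is_bounded_op S /\
    forall x y, ipA A (T x) y = ipA A x (S y).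

(* X = T^{#_A}: the reduced solution of A X = T^* A, i.e. the bounded X with
   A X = T^* A (written out: <A X x, y> = <A x, T y> = <T^* A x, y>) and
   R(X) contained in closure R(A) = N(A)^perp. *)
Definition is_Asharp (A T X : V -> V) : Prop :=
  [/\ is_bounded_op X,
      (forall x y, ip (A (X x)) y = ip (A x) (T y)) &
      (forall x z, A z = 0 -> ip (X x) z = 0)].

Definition Aopnorm (A T : V -> V) : R :=
  sup [set r : R | exists x, Anorm A x = 1 /\ r = Anorm A (T x)].

Definition Anumrad (A T : V -> V) : R :=
  sup [set r : R | exists x, Anorm A x = 1 /\ r = complex.Re `|ipA A (T x) x|].

End Hilbert.

From mathcomp Require Import all_boot all_order all_algebra.
From mathcomp Require Import complex.
From mathcomp Require Import classical_sets reals.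
From mathcomp Require Import ring lra.
Import Order.TTheory GRing.Theory Num.Theory.
Set Implicit Arguments.
Unset Strict Implicit.
Unset Printing Implicit Defensive.
Local Open Scope complex_scope.
Local Open Scope ring_scope.

(* For an [A]-unit vector [x], [<TSx, x>_A] is the mean of [<(TS + ST^#)x, x>_A] and
   [<(TS - ST^#)x, x>_A], and since [<TSx, x>_A = <Sx, T^#x>_A] these two numbers are
   [<Sx, T^#x>_A +- <ST^#x, x>_A].  By polarization, for [|s| = 1],
   [|s^* <Su, v>_A + s <Sv, u>_A| <= omega_A(S) (||u||_A^2 + ||v||_A^2)]; rescaling [v]
   and optimizing turns the right-hand side into [2 omega_A(S) ||u||_A ||v||_A], and
   [||T^#x||_A <= ||T||_A].  So the term with the opposite sign is at most
   [2 ||T||_A omega_A(S)], which gives both inequalities.  The suprema defining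
   [||T||_A] and [omega_A(S)] are finite because operators of [B_A(H)] are
   [A]-bounded, by Lax's power trick. *)

Section ComplexModulus.
Variable R : realType.
Implicit Types (z w : R[i]) (t : R).

Definition cmod z : R := complex.Re `|z|.

Lemma cmodE z : `|z| = (cmod z)%:C.
Proof. by rewrite /cmod RRe_real // normr_real. Qed.

Lemma cmod_ge0 z : 0 <= cmod z.
Proof. by rewrite -ler0c -cmodE. Qed.

Lemma cmodM z w : cmod (z * w) = cmod z * cmod w.
Proof. by apply: complexI; rewrite rmorphM /= -!cmodE normrM. Qed.

Lemma ler_cmodD z w : cmod (z + w) <= cmod z + cmod w.
Proof. by rewrite -lecR rmorphD /= -!cmodE ler_normD. Qed.

Lemma cmodN z : cmod (- z) = cmod z.
Proof. by rewrite /cmod normrN. Qed.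

Lemma cmodR t : cmod t%:C = `|t|.
Proof. by apply: complexI; rewrite -cmodE normc_def /= expr0n /= addr0 sqrtr_sqr. Qed.

Lemma cmod_nat n : cmod n%:R = n%:R.
Proof. by rewrite /cmod normr_nat -(rmorph_nat (real_complex R)). Qed.

Lemma cmod1 : cmod 1 = 1 :> R.
Proof. exact: cmod_nat 1. Qed.

Lemma cmodV z : cmod z^-1 = (cmod z)^-1.
Proof. by apply: complexI; rewrite fmorphV /= -!cmodE normfV. Qed.

Lemma cmodi : cmod 'i = 1.
Proof. by apply: complexI; rewrite -cmodE normc_def /= expr0n expr1n add0r sqrtr1. Qed.

Lemma cmod_eq0 z : (cmod z == 0) = (z == 0).
Proof. by rewrite -[z == 0]normr_eq0 cmodE (inj_eq (@complexI _)). Qed.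

Lemma sqr_cmod z : (cmod z ^+ 2)%:C = z * z^*.
Proof. by rewrite rmorphXn /= -cmodE normCK. Qed.

Lemma Re_le_cmod z : complex.Re z <= cmod z.
Proof.
by rewrite -lecR -cmodE; apply: le_trans (normc_ge_Re z); rewrite lecR ler_norm.
Qed.

Lemma conjcR t : (t%:C)^* = t%:C.
Proof. by apply: conj_Creal; apply/complex_realP; exists t. Qed.

Lemma ge0_ReE z : 0 <= z -> z = (complex.Re z)%:C.
Proof. by move=> z0; rewrite RRe_real // ger0_real. Qed.

End ComplexModulus.

Section RealInequalities.
Variable R : realType.

Lemma bernoulli_le (x : R) n : 0 <= x -> 1 + n%:R * x <= (1 + x) ^+ n.
Proof.
move=> x0; elim: n => [|n IH]; first by rewrite mul0r addr0 expr0.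
rewrite exprS -natr1; apply: le_trans (ler_wpM2l _ IH); last lra.
have := mulr_ge0 (ler0n R n) (sqr_ge0 x); nra.
Qed.

Lemma le1_of_bounded_pow2 (v L : R) : (forall j, v ^+ (2 ^ j) <= L) -> v <= 1.
Proof.
move=> hL; rewrite leNgt; apply/negP => v1.
have x0 : 0 < v - 1 by rewrite subr_gt0.
set n := Num.bound (`|L| / (v - 1)).
have hn : `|L| / (v - 1) < n%:R by apply: archi_boundP; rewrite divr_ge0 // ltW.
have n2n : n%:R <= (2 ^ n)%:R :> R by rewrite ler_nat ltnW // ltn_expl.
have := bernoulli_le (2 ^ n) (ltW x0); rewrite subrKC.
have : `|L| < n%:R * (v - 1) by rewrite -ltr_pdivrMr.
have := hL n; have := ler_norm L; have := ler_wpM2r (ltW x0) n2n; lra.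
Qed.

Lemma le1_of_sqr_chain (w : nat -> R) (L : R) : (forall j, 0 <= w j) ->
  (forall j, w j ^+ 2 <= w j.+1) -> (forall j, w j <= L) -> w 0%N <= 1.
Proof.
move=> w0 wS wL; apply: (@le1_of_bounded_pow2 _ L) => j; apply: le_trans (wL j).
elim: j => [|j IH]; first by rewrite expn0 expr1.
rewrite expnS mulnC exprM; apply: le_trans (wS j).
by rewrite lerXn2r ?nnegrE ?exprn_ge0.
Qed.

(* [inf_(t > 0) (1 / t + t N^2) = 2 N], attained at [t = 1 / N]. *)
Lemma le_of_forall_scaled (D w N : R) : 0 <= N -> 0 <= w ->
  (forall t, 0 < t -> t * D <= w * (1 + t ^+ 2 * N ^+ 2)) -> D <= 2 * N * w.
Proof.
move=> N0 w0 h; have [N00|Nn0] := eqVneq N 0.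
  rewrite N00 expr0n /= in h; rewrite N00 !mulr0 mul0r leNgt; apply/negP => D0.
  have t0 : 0 < (w + 1) / D by rewrite divr_gt0 // ltr_wpDl.
  have := h _ t0; rewrite divfK ?gt_eqF // mulr0 addr0 mulr1; lra.
have Np : 0 < N by rewrite lt_neqAle eq_sym Nn0.
have Ni : 0 < N^-1 by rewrite invr_gt0.
have := h _ Ni; rewrite -exprMn mulVf // expr1n -(ler_pM2l Np) mulrA mulfV // mul1r.
lra.
Qed.

End RealInequalities.

Section HermitianForm.
Variables (R : realType) (V : lmodType R[i]) (F : V -> V -> R[i]).
Hypotheses (FD : forall x y z, F (x + y) z = F x z + F y z)
  (FZ : forall a x y, F (a *: x) y = a * F x y)
  (FJ : forall x y, F y x = (F x y)^*)
  (Fge0 : forall x, 0 <= F x x).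
Local Notation q := (hnorm F).

Lemma formNl x y : F (- x) y = - F x y.
Proof. by rewrite -scaleN1r FZ mulN1r. Qed.

Lemma formBl x x' y : F (x - x') y = F x y - F x' y.
Proof. by rewrite FD formNl. Qed.

Lemma formDr x y z : F x (y + z) = F x y + F x z.
Proof. by rewrite FJ FD rmorphD /= -!FJ. Qed.

Lemma formZr a x y : F x (a *: y) = a^* * F x y.
Proof. by rewrite FJ FZ rmorphM /= -FJ. Qed.

Lemma formNr x y : F x (- y) = - F x y.
Proof. by rewrite FJ formNl rmorphN /= -FJ. Qed.

Lemma formBr x y y' : F x (y - y') = F x y - F x y'.
Proof. by rewrite formDr formNr. Qed.

Lemma Re_form_ge0 x : 0 <= complex.Re (F x x).
Proof. by rewrite -ler0c -ge0_ReE. Qed.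

Lemma hnorm_ge0 x : 0 <= q x.
Proof. exact: sqrtr_ge0. Qed.

Lemma sqr_hnorm x : q x ^+ 2 = complex.Re (F x x).
Proof. by rewrite sqr_sqrtr // Re_form_ge0. Qed.

Lemma sqr_hnormC x : (q x ^+ 2)%:C = F x x.
Proof. by rewrite sqr_hnorm -ge0_ReE. Qed.

Lemma hnormZ a x : q (a *: x) = cmod a * q x.
Proof.
rewrite /hnorm FZ formZr mulrA -sqr_cmod [F x x](ge0_ReE (Fge0 x)) -rmorphM /=.
by rewrite sqrtrM ?sqr_ge0 // sqrtr_sqr ger0_norm ?cmod_ge0.
Qed.

Lemma hnorm_parallelogram u v :
  q (u + v) ^+ 2 + q (u - v) ^+ 2 = 2 * q u ^+ 2 + 2 * q v ^+ 2.
Proof.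
apply: complexI; rewrite !rmorphD !(rmorphM _ 2) /= !sqr_hnormC.
rewrite !FD !formNl !formDr !formNr (rmorph_nat (real_complex R)); ring.
Qed.

Lemma form_polarization (S : V -> V) (SD : forall x y, S (x + y) = S x + S y)
  (SN : forall x, S (- x) = - S x) u v :
  F (S (u + v)) (u + v) - F (S (u - v)) (u - v) = 2 * (F (S u) v + F (S v) u).
Proof. rewrite !SD SN !FD !formNl !formDr !formNr; ring. Qed.

(* Nonnegativity of [F (x - t c y) (x - t c y)] for all real [t], with [c = F x y]. *)
Lemma sqr_cmod_form_le x y :
  cmod (F x y) ^+ 2 <= complex.Re (F x x) * complex.Re (F y y).
Proof.
set c := F x y; set X := complex.Re (F x x); set Y := complex.Re (F y y).
have := sqr_cmod c; move: (cmod c ^+ 2) => k kC.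
have key t : 0 <= X - 2 * t * k + t ^+ 2 * k * Y.
  have := Fge0 (x - (t%:C * c) *: y).
  rewrite formBl !formBr !FZ !formZr [F y x]FJ -/c.
  rewrite (ge0_ReE (Fge0 x)) (ge0_ReE (Fge0 y)) -/X -/Y rmorphM /= conjcR.
  suff -> : X%:C - t%:C * c^* * c - (t%:C * c * c^* - t%:C * c * (t%:C * c^* * Y%:C))
      = (X - 2 * t * k + t ^+ 2 * k * Y)%:C by rewrite ler0c.
  rewrite !rmorphD !rmorphN !rmorphM /= kC (rmorph_nat (real_complex R)); ring.
have Y0 : 0 <= Y := Re_form_ge0 y.
have [Y00|Yn0] := eqVneq Y 0.
  rewrite Y00 mulr0 leNgt; apply/negP => k0.
  have := key ((X + 1) / (2 * k)); rewrite Y00 mulr0 addr0.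
  have -> : 2 * ((X + 1) / (2 * k)) * k = X + 1 by field; rewrite gt_eqF.
  lra.
have Yp : 0 < Y by rewrite lt_neqAle eq_sym Yn0.
have := key Y^-1.
have -> : X - 2 * Y^-1 * k + Y^-1 ^+ 2 * k * Y = X - k / Y by field.
by rewrite subr_ge0 ler_pdivrMr.
Qed.

Lemma cmod_form_le x y : cmod (F x y) <= q x * q y.
Proof.
have := sqr_cmod_form_le x y; rewrite -!sqr_hnorm -exprMn.
by rewrite ler_pXn2r // nnegrE ?cmod_ge0 ?mulr_ge0 ?hnorm_ge0.
Qed.

Lemma form_eq0_of_hnorm0 x y : q x = 0 -> F x y = 0.
Proof.
move=> qx0; apply/eqP; rewrite -cmod_eq0 eq_le cmod_ge0 andbT.
by have := cmod_form_le x y; rewrite qx0 mul0r.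
Qed.

End HermitianForm.

Section LinearMaps.
Variables (R : realType) (V : lmodType R[i]) (T : V -> V).
Hypothesis Tlin : linear T.

Lemma lin0 : T 0 = 0.
Proof. by have := Tlin 1 0 0; rewrite !scale1r !addr0 -{1}[T 0]addr0 => /addrI/esym. Qed.

Lemma linD x y : T (x + y) = T x + T y.
Proof. by have := Tlin 1 x y; rewrite !scale1r. Qed.

Lemma linZ a x : T (a *: x) = a *: T x.
Proof. by have := Tlin a x 0; rewrite !addr0 lin0 addr0. Qed.

Lemma linN x : T (- x) = - T x.
Proof. by rewrite -scaleN1r linZ scaleN1r. Qed.

End LinearMaps.

(* Complex polarization: [G x y] is recovered from the values of [G] on the diagonal. *)
Lemma sesqui_eq0 (R : realType) (V : lmodType R[i]) (G : V -> V -> R[i]) :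
  (forall x y z, G (x + y) z = G x z + G y z) ->
  (forall a x y, G (a *: x) y = a * G x y) ->
  (forall x y z, G x (y + z) = G x y + G x z) ->
  (forall a x y, G x (a *: y) = a^* * G x y) ->
  (forall x, G x x = 0) -> forall x y, G x y = 0.
Proof.
move=> GD GZ GDr GZr G0 x y.
have e1 := G0 (x + y); rewrite !GD !GDr !G0 add0r addr0 in e1.
have e2 := G0 (x + 'i *: y).
rewrite !GD !GDr !GZ !GZr !G0 !mulr0 add0r addr0 conjCi in e2.
have ii : 'i * 'i = -1 :> R[i] by rewrite -expr2 sqr_i.
have : 2 * G x y = (G x y + G y x) + 'i * (- 'i * G x y + 'i * G y x).
  by rewrite mulrDr !mulrA mulrN ii; ring.
by rewrite e1 e2 mulr0 addr0 => /eqP; rewrite mulf_eq0 pnatr_eq0 => /eqP.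
Qed.

Section PositiveOperator.
Variables (R : realType) (V : lmodType R[i]) (ip : V -> V -> R[i]).
Hypothesis hip : is_inner_product ip.
Variable A : V -> V.
Hypothesis hA : is_positive_op ip A.

Local Notation ipa := (ipA ip A).
Local Notation na := (Anorm ip A).
Local Notation nh := (hnorm ip).

Let ipD x y z : ip (x + y) z = ip x z + ip y z. Proof. by case: hip. Qed.
Let ipZ a x y : ip (a *: x) y = a * ip x y. Proof. by case: hip. Qed.
Let ipJ x y : ip y x = (ip x y)^*. Proof. by case: hip. Qed.
Let ip_ge0 x : 0 <= ip x x. Proof. by case: hip. Qed.
Let Alin : linear A. Proof. by case: hA => [[]]. Qed.

Lemma positive_op_sym x y : ip (A x) y = ip x (A y).
Proof.
apply/eqP; rewrite -subr_eq0; apply/eqP; move: x y.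
apply: (@sesqui_eq0 R V (fun x y => ip (A x) y - ip x (A y)))
  => [x y z|a x y|x y z|a x y|x].
- by rewrite (linD Alin) !ipD; ring.
- by rewrite (linZ Alin) !ipZ; ring.
- by rewrite (linD Alin) !(formDr ipD ipJ); ring.
- by rewrite (linZ Alin) !(formZr ipZ ipJ); ring.
- apply/eqP; rewrite subr_eq0 [ip x (A x)]ipJ; apply/eqP/esym.
  by apply: conj_Creal; apply: ger0_real; case: hA.
Qed.

Let ipAD x y z : ipa (x + y) z = ipa x z + ipa y z.
Proof. by rewrite /ipA (linD Alin) ipD. Qed.
Let ipAZ a x y : ipa (a *: x) y = a * ipa x y.
Proof. by rewrite /ipA (linZ Alin) ipZ. Qed.
Let ipAJ x y : ipa y x = (ipa x y)^*.
Proof. by rewrite /ipA positive_op_sym ipJ; reflexivity. Qed.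
Let ipA_ge0 x : 0 <= ipa x x.
Proof. by case: hA => _; apply. Qed.

Let Anorm_ge0 x : 0 <= na x := hnorm_ge0 ipa x.
Let sqr_Anorm x : na x ^+ 2 = complex.Re (ipa x x) := sqr_hnorm ipA_ge0 x.
Let AnormZ a x : na (a *: x) = cmod a * na x := hnormZ ipAZ ipAJ ipA_ge0 a x.
Let cmod_ipA_le x y : cmod (ipa x y) <= na x * na y :=
  cmod_form_le ipAD ipAZ ipAJ ipA_ge0 x y.
Let Anorm_parallelogram u v :
  na (u + v) ^+ 2 + na (u - v) ^+ 2 = 2 * na u ^+ 2 + 2 * na v ^+ 2 :=
  hnorm_parallelogram ipAD ipAZ ipAJ ipA_ge0 u v.
Let ipAZr a x y : ipa x (a *: y) = a^* * ipa x y := formZr ipAZ ipAJ a x y.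

Lemma bounded_opP T : is_bounded_op ip T ->
  exists2 c, 0 < c & forall x, nh (T x) <= c * nh x.
Proof.
case=> _ [c hc]; exists (`|c| + 1) => [|x]; first by rewrite ltr_wpDl.
apply: le_trans (hc x) _; rewrite ler_wpM2r ?hnorm_ge0 //.
by apply: le_trans (ler_norm c) _; rewrite lerDl.
Qed.

Lemma Anorm_le_hnorm : exists2 c, 0 <= c & forall x, na x <= c * nh x.
Proof.
have [c c0 hc] := bounded_opP (proj1 hA).
exists (Num.sqrt c) => [|x]; first exact: sqrtr_ge0.
rewrite -[nh x]ger0_norm ?hnorm_ge0 // -sqrtr_sqr -sqrtrM ?(ltW c0) //.
apply: ler_wsqrtr; apply: le_trans (Re_le_cmod _) _.
apply: le_trans (cmod_form_le ipD ipZ ipJ ip_ge0 _ _) _.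
by rewrite expr2 mulrA ler_wpM2r ?hnorm_ge0.
Qed.

(* Along [k = 2^j], [na (M^k x) ^ 2 <= na x * na (M^(2k) x)]
   forces the normalized quantities [na (M^k x) / (na x * m^k)] to grow by
   squaring, while the crude bound [na <= c * nh] keeps them bounded, so they
   never exceed 1. *)
Lemma Anorm_le_of_Asym M m : 0 < m -> (forall y, nh (M y) <= m * nh y) ->
  (forall x y, ipa (M x) y = ipa x (M y)) -> forall x, na (M x) <= m * na x.
Proof.
move=> m0 hM Msym x; have [c c0 hc] := Anorm_le_hnorm.
have Mk_sym k y z : ipa (iter k M y) z = ipa y (iter k M z).
  by elim: k y z => [//|k IH] y z; rewrite iterS Msym IH -iterSr.
have Mk_sqr k : na (iter k M x) ^+ 2 <= na x * na (iter (k + k) M x).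
  rewrite sqr_Anorm Mk_sym iterD.
  exact: le_trans (Re_le_cmod _) (cmod_ipA_le _ _).
have Mk_le k : na (iter k M x) <= c * nh x * m ^+ k.
  apply: le_trans (hc _) _; rewrite -mulrA ler_wpM2l // mulrC.
  elim: k => [|k IH]; first by rewrite expr0 mul1r.
  rewrite iterS exprS -mulrA; apply: le_trans (hM _) _.
  by rewrite ler_pM2l.
have [nx0|nx0] := eqVneq (na x) 0.
  have := Mk_sqr 1%N; rewrite nx0 mul0r mulr0 /=.
  by have := Anorm_ge0 (M x); nra.
have nxp : 0 < na x by rewrite lt_neqAle eq_sym nx0 Anorm_ge0.
pose w j := na (iter (2 ^ j) M x) / (na x * m ^+ (2 ^ j)).
have mp k : 0 < m ^+ k by rewrite exprn_gt0.
have : w 0%N <= 1.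
  apply: (@le1_of_sqr_chain _ w (c * nh x / na x)) => j.
  - by rewrite divr_ge0 ?mulr_ge0 ?Anorm_ge0 ?exprn_ge0 ?(ltW m0).
  - have -> : w j.+1 = na x * na (iter (2 ^ j + 2 ^ j) M x) / (na x * m ^+ (2 ^ j)) ^+ 2.
      rewrite /w addnn -mul2n -expnS exprMn -exprM expnSr; field.
      by rewrite !gt_eqF ?exprn_gt0.
    by rewrite expr_div_n ler_pM2r ?invr_gt0 ?exprn_gt0 ?mulr_gt0.
  - by rewrite /w ler_pdivrMr ?mulr_gt0 // mulrA divfK ?gt_eqF.
by rewrite /w expn0 expr1 ler_pdivrMr ?mulr_gt0 // mul1r mulrC.
Qed.

Definition is_Abounded T := exists c, forall x, na (T x) <= c * na x.

Lemma in_BA_Abounded T : in_BA ip A T -> is_Abounded T.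
Proof.
case=> hT [T' [hT' adj]].
have [cT cT0 hcT] := bounded_opP hT; have [cT' cT'0 hcT'] := bounded_opP hT'.
have Msym x y : ipa (T' (T x)) y = ipa x (T' (T y)).
  by rewrite ipAJ -adj -ipAJ adj.
have hM y : nh (T' (T y)) <= cT' * cT * nh y.
  by apply: le_trans (hcT' _) _; rewrite -mulrA ler_pM2l.
have m0 : 0 < cT' * cT := mulr_gt0 cT'0 cT0.
have lax := Anorm_le_of_Asym m0 hM Msym.
exists (Num.sqrt (cT' * cT)) => x.
rewrite -(@ler_pXn2r _ 2) ?nnegrE ?mulr_ge0 ?sqrtr_ge0 ?Anorm_ge0 //.
rewrite exprMn (sqr_sqrtr (ltW m0)) sqr_Anorm adj.
apply: le_trans (Re_le_cmod _) _; apply: le_trans (cmod_ipA_le _ _) _.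
by rewrite mulrC expr2 mulrA ler_wpM2r ?Anorm_ge0 ?lax.
Qed.

Lemma Anorm_normalize x : na x != 0 -> na ((na x)^-1%:C *: x) = 1.
Proof. by move=> nx0; rewrite AnormZ cmodR ger0_norm ?invr_ge0 ?Anorm_ge0 ?mulVf. Qed.

Lemma exists_Anorm1 : (exists x, A x != 0) -> exists x, na x = 1.
Proof.
case=> x Ax0; exists ((na x)^-1%:C *: x); apply: Anorm_normalize.
apply: contra Ax0 => /eqP nx0; apply/eqP; case: hip => _ _ _ _; apply.
exact: (form_eq0_of_hnorm0 ipAD ipAZ ipAJ ipA_ge0).
Qed.

Lemma Anorm_Aadjoint_le T T' N : 0 <= N -> (forall x, na (T x) <= N * na x) ->
  (forall x y, ipa (T' x) y = ipa x (T y)) -> forall x, na (T' x) <= N * na x.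
Proof.
move=> N0 hT adj x.
have : na (T' x) ^+ 2 <= na x * (N * na (T' x)).
  rewrite sqr_Anorm adj; apply: le_trans (Re_le_cmod _) _.
  by apply: le_trans (cmod_ipA_le _ _) _; rewrite ler_wpM2l ?Anorm_ge0.
have := Anorm_ge0 (T' x); have := Anorm_ge0 x; have := mulr_ge0 N0 (Anorm_ge0 x).
nra.
Qed.

Section Suprema.
Hypothesis unit_ex : exists x, na x = 1.

Lemma Anorm_le_Aopnorm T : linear T -> is_Abounded T ->
  forall x, na (T x) <= Aopnorm ip A T * na x.
Proof.
move=> Tlin [c hc] x.
have ub y : na y = 1 -> na (T y) <= Aopnorm ip A T.
  move=> y1; apply: ub_le_sup; last by exists y.
  by exists c => _ [z [z1 ->]]; rewrite -[c]mulr1 -z1.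
have [nx0|nx0] := eqVneq (na x) 0.
  by have := hc x; rewrite nx0 !mulr0.
have := ub _ (Anorm_normalize nx0); rewrite (linZ Tlin) AnormZ cmodR.
have nxp : 0 < na x by rewrite lt_def nx0 Anorm_ge0.
by rewrite ger0_norm ?invr_ge0 ?Anorm_ge0 // ler_pdivrMl // mulrC.
Qed.

Lemma Aopnorm_ge0 T : linear T -> is_Abounded T -> 0 <= Aopnorm ip A T.
Proof.
move=> Tlin hT; have [x x1] := unit_ex.
by have := Anorm_le_Aopnorm Tlin hT x; rewrite x1 mulr1; apply: le_trans.
Qed.

Definition Anumrange_bounded W := exists c, forall x, na x = 1 -> cmod (ipa (W x) x) <= c.

Lemma Anumrange_bounded_of_Abounded W : is_Abounded W -> Anumrange_bounded W.
Proof.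
case=> c hc; exists c => x x1; apply: le_trans (cmod_ipA_le _ _) _.
by have := hc x; rewrite x1 !mulr1.
Qed.

Lemma cmod_ipA_le_Anumrad W x : Anumrange_bounded W -> na x = 1 ->
  cmod (ipa (W x) x) <= Anumrad ip A W.
Proof.
by case=> c hc x1; apply: ub_le_sup; [exists c => _ [y [y1 ->]]; apply: hc | exists x].
Qed.

Lemma Anumrad_ge0 W : Anumrange_bounded W -> 0 <= Anumrad ip A W.
Proof.
move=> hW; have [x x1] := unit_ex.
exact: le_trans (cmod_ge0 _) (cmod_ipA_le_Anumrad hW x1).
Qed.

Lemma cmod_ipA_le_Anumrad_sqr W : linear W -> Anumrange_bounded W ->
  forall y, cmod (ipa (W y) y) <= Anumrad ip A W * na y ^+ 2.
Proof.
move=> Wlin hW y; have [ny0|ny0] := eqVneq (na y) 0.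
  rewrite ipAJ (form_eq0_of_hnorm0 ipAD ipAZ ipAJ ipA_ge0 _ ny0) ny0 expr0n mulr0.
  by rewrite conjC0 /cmod normr0.
have := cmod_ipA_le_Anumrad hW (Anorm_normalize ny0).
rewrite (linZ Wlin) ipAZ ipAZr conjcR mulrA -rmorphM cmodM cmodR ger0_norm; last first.
  by rewrite mulr_ge0 ?invr_ge0 ?Anorm_ge0.
have nyp : 0 < na y by rewrite lt_def ny0 Anorm_ge0.
by rewrite -invfM -expr2 ler_pdivrMl ?exprn_gt0 // mulrC.
Qed.

Lemma cmod_ipA_symm_le W : linear W -> Anumrange_bounded W -> forall u v,
  cmod (ipa (W u) v + ipa (W v) u) <= Anumrad ip A W * (na u ^+ 2 + na v ^+ 2).
Proof.
move=> Wlin hW u v; have hWsq := cmod_ipA_le_Anumrad_sqr Wlin hW.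
have := ler_cmodD (ipa (W (u + v)) (u + v)) (- ipa (W (u - v)) (u - v)).
rewrite (form_polarization ipAD ipAZ ipAJ (linD Wlin) (linN Wlin)) cmodN cmodM.
rewrite cmod_nat => h2.
have := lerD (hWsq (u + v)) (hWsq (u - v)).
rewrite -mulrDr Anorm_parallelogram -mulrDr mulrCA; lra.
Qed.

(* Applied to [u] and [t s v] with real [t > 0], the previous bound reads
   [t * cmod D <= Anumrad W * (1 + t ^ 2 * na v ^ 2)] for the [D] below. *)
Lemma cmod_ipA_symm_le_unit W (s : R[i]) u v :
  linear W -> Anumrange_bounded W -> na u = 1 -> cmod s = 1 ->
  cmod (s^* * ipa (W u) v + s * ipa (W v) u) <= 2 * na v * Anumrad ip A W.
Proof.
move=> Wlin hW u1 s1; apply: le_of_forall_scaled => [||t t0].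
- exact: Anorm_ge0.
- exact: Anumrad_ge0.
have := cmod_ipA_symm_le Wlin hW u ((t%:C * s) *: v).
rewrite (linZ Wlin) ipAZ ipAZr AnormZ u1 cmodM cmodR s1 (ger0_norm (ltW t0)).
rewrite mulr1 expr1n exprMn rmorphM /= conjcR -!mulrA -mulrDr cmodM cmodR.
by rewrite (ger0_norm (ltW t0)).
Qed.

Lemma Anumrad_le_mean W W1 W2 c :
  (forall x, ipa (W x) x = 2^-1 * (ipa (W1 x) x + ipa (W2 x) x)) ->
  (forall x, na x = 1 -> cmod (ipa (W1 x) x) <= 2 * c) ->
  (forall x, na x = 1 -> cmod (ipa (W2 x) x) <= 2 * c) ->
  Anumrad ip A W <= c + 2^-1 * Anumrad ip A W1.
Proof.
move=> Wmean hW1 hW2; have [x0 x01] := unit_ex.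
apply: ge_sup => [|_ [x [x1 ->]]]; first by exists (cmod (ipa (W x0) x0)), x0.
rewrite -/(cmod _) Wmean cmodM cmodV cmod_nat.
have := ler_cmodD (ipa (W1 x) x) (ipa (W2 x) x).
have := cmod_ipA_le_Anumrad (ex_intro _ _ hW1) x1; have := hW2 _ x1; lra.
Qed.

Lemma ipA_midpoint a b x : ipa a x = 2^-1 * (ipa (a + b) x + ipa (a - b) x).
Proof. by rewrite ipAD (formBl ipAD ipAZ); field. Qed.

Lemma cmod_ipA_TS_le T S Ts : in_BA ip A T -> in_BA ip A S ->
  (forall x y, ipa (Ts x) y = ipa x (T y)) -> forall x, na x = 1 ->
  cmod (ipa (T (S x) + S (Ts x)) x) <= 2 * (Aopnorm ip A T * Anumrad ip A S) /\
  cmod (ipa (T (S x) - S (Ts x)) x) <= 2 * (Aopnorm ip A T * Anumrad ip A S).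
Proof.
move=> hT hS hTs x x1.
have [[[Tlin _] _] [[Slin _] _]] := (hT, hS).
have hN := Anorm_le_Aopnorm Tlin (in_BA_Abounded hT).
have N0 := Aopnorm_ge0 Tlin (in_BA_Abounded hT).
have hSr := Anumrange_bounded_of_Abounded (in_BA_Abounded hS).
have Tsx : na (Ts x) <= Aopnorm ip A T.
  by have := Anorm_Aadjoint_le N0 hN hTs x; rewrite x1 mulr1.
have TS_adj : ipa (T (S x)) x = ipa (S x) (Ts x) by rewrite ipAJ -hTs -ipAJ.
have sym_le s : cmod s = 1 ->
    cmod (s^* * ipa (S x) (Ts x) + s * ipa (S (Ts x)) x)
      <= 2 * (Aopnorm ip A T * Anumrad ip A S).
  move=> s1; apply: le_trans (cmod_ipA_symm_le_unit (Ts x) Slin hSr x1 s1) _.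
  rewrite -mulrA ler_pM2l //; apply: ler_wpM2r Tsx; exact: Anumrad_ge0.
split.
- by have := sym_le 1 (cmod1 R); rewrite conjC1 !mul1r ipAD TS_adj.
- have := sym_le 'i (cmodi R); rewrite conjCi (formBl ipAD ipAZ) TS_adj.
  rewrite (_ : - 'i * _ + _ = - 'i * (ipa (S x) (Ts x) - ipa (S (Ts x)) x)).
    by rewrite cmodM cmodN cmodi mul1r.
  by ring.
Qed.

End Suprema.

End PositiveOperator.

Theorem theorem2p2 (R : realType) (V : lmodType R[i]) (ip : V -> V -> R[i])
  (hH : is_hilbert ip) (A : V -> V) (hA : is_positive_op ip A)
  (hA0 : exists x, A x != 0)
  (T S Tsharp : V -> V) (hT : in_BA ip A T) (hS : in_BA ip A S)
  (hTs : is_Asharp ip A T Tsharp) :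
  Anumrad ip A (fun x => T (S x))
    <= Aopnorm ip A T * Anumrad ip A S
       + 2^-1 * Anumrad ip A (fun x => T (S x) + S (Tsharp x)) /\
  Anumrad ip A (fun x => T (S x))
    <= Aopnorm ip A T * Anumrad ip A S
       + 2^-1 * Anumrad ip A (fun x => T (S x) - S (Tsharp x)).
Proof.
have hip := proj1 hH.
have unit_ex := exists_Anorm1 hip hA hA0.
have Tsharp_adj : forall x y, ipA ip A (Tsharp x) y = ipA ip A x (T y).
  by case: hTs.
have bound := cmod_ipA_TS_le hip hA unit_ex hT hS Tsharp_adj.
split; apply: (Anumrad_le_mean unit_ex) => [x|x x1|x x1].
- exact: (ipA_midpoint hip hA).
- exact: (bound x x1).1.
- exact: (bound x x1).2.
- by rewrite addrC; apply: (ipA_midpoint hip hA).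
- exact: (bound x x1).2.
- exact: (bound x x1).1.
Qed.
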